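(* Let $(\Omega(\mathcal A),\wedge,[\cdot,\cdot],\mathbf d)$ be a differential Gerstenhaber superalgebra, and let $(\Omega^1(\mathcal A),\llbracket\cdot,\cdot\rrbracket,\rho)$ be the associated Lie superalgebroid, $\llbracket\alpha,\beta\rrbracket=[\alpha,\beta]$, $\rho(\alpha)=[\alpha,\cdot]|_{\mathcal A}$. Then $\rho$ is skew-supersymmetric, $\llbracket\mathbf d f,\mathbf d g\rrbracket=\mathbf d(\rho(\mathbf d f)(g))$ for all $f,g\in\mathcal A$, and consequently the bracket has the form $$\llbracket\alpha,\beta\rrbracket=\rho(\alpha)\lrcorner\mathbf d\beta-(-1)^{p(\alpha)p(\beta)}\rho(\beta)\lrcorner\mathbf d\alpha+\mathbf d\big(\beta(\rho(\alpha))\big),$$ and the superalgebroid is of Poisson type.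
   Context: $\mathcal A$ is a $\mathbb Z$-graded, associative, graded-commutative unital real algebra, regarded as supercommutative with parity $p$ = degree mod 2. $\operatorname{Der}(\mathcal A)$: graded derivations. $\Omega^1(\mathcal A)=\ker(\mathbf m:\mathcal A\otimes\mathcal A\to\mathcal A)$ with $\mathbf d a=a\otimes1-1\otimes a$, generated over $\mathcal A$ by $\mathbf d\mathcal A$, paired with $\operatorname{Der}(\mathcal A)$ via $\langle D,\mathbf d a\rangle=D(a)$, written $\alpha(D)$; $\Omega(\mathcal A)$ is the algebra of superforms generated over $\mathcal A$ by $\Omega^1(\mathcal A)$, bigraded by form degree $\deg$ and parity $p$, with exterior superderivative $\mathbf d$ ($\mathbf d^2=0$) and interior product $D\lrcorner$. A Gerstenhaber superbracket on $\Omega(\mathcal A)$ satisfies, for bihomogeneous elements, $[\alpha,\beta]=-(-1)^{(\deg\alpha-1)(\deg\beta-1)+p(\alpha)p(\beta)}[\beta,\alpha]$, $[\alpha,[\beta,\gamma]]=[[\alpha,\beta],\gamma]+(-1)^{(\deg\alpha-1)(\deg\beta-1)+p(\alpha)p(\beta)}[\beta,[\alpha,\gamma]]$, $[\alpha,\beta\wedge\gamma]=[\alpha,\beta]\wedge\gamma+(-1)^{(\deg\alpha-1)\deg\beta+p(\alpha)p(\beta)}\beta\wedge[\alpha,\gamma]$, and has form degree $-1$; it is differential if $\mathbf d[\alpha,\beta]=[\mathbf d\alpha,\beta]+(-1)^{\deg\alpha-1}[\alpha,\mathbf d\beta]$. A Lie superalgebroid on $\Omega^1(\mathcal A)$ is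 an even $\mathcal A$-linear anchor $\rho:\Omega^1(\mathcal A)\to\operatorname{Der}(\mathcal A)$ with a bilinear bracket making $\Omega^1(\mathcal A)$ a Lie superalgebra and satisfying $\llbracket\alpha,f\beta\rrbracket=\rho(\alpha)(f)\beta+(-1)^{p(\alpha)p(f)}f\llbracket\alpha,\beta\rrbracket$. The anchor is skew-supersymmetric if $\alpha(\rho(\beta))=-(-1)^{p(\alpha)p(\beta)}\beta(\rho(\alpha))$. A Lie superalgebroid is of Poisson type if its anchor is skew-supersymmetric and $\{f,g\}:=\rho(\mathbf d f)(g)$ satisfies $\{f,\{g,h\}\}=\{\{f,g\},h\}+(-1)^{p(f)p(g)}\{g,\{f,h\}\}$ (equivalently $[\rho(\mathbf d f),\rho(\mathbf d g)]=\rho(\mathbf d\{f,g\})$). *)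

(* Abstract (axiomatic) model of the differential Gerstenhaber
   superalgebra of superforms Omega(A) over a supercommutative algebra A. *)
From HB Require Import structures.
From mathcomp Require Import all_boot all_order all_algebra.
Set Implicit Arguments. Unset Strict Implicit. Unset Printing Implicit Defensive.
Import Order.TTheory GRing.Theory Num.Theory.
Local Open Scope ring_scope.

Definition sgn {R : pzRingType} (n : nat) : R := (-1) ^+ n.

Definition superder (K : realFieldType) (A : lalgType K)
    (parA : bool -> pred A) (q : bool) (D : A -> A) : Prop :=
  [/\ forall a b, D (a + b) = D a + D b,
      forall (c : K) a, D (c *: a) = c *: D a,
      forall p a, parA p a -> parA (p (+) q) (D a)
    & forall p a b, parA p a -> D (a * b) = D a * b + sgn (q && p) * (a * D b)].

(* The algebra Om of superforms over the superalgebra A, bigraded by form degree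
   (fdeg k) and parity (par p), with wedge product = the ring product of Om,
   A identified with the 0-forms via emb (inverse of0), exterior superderivative
   dd, and interior product ip D for D in Der(A). *)
Record superforms (K : realFieldType) (A Om : lalgType K) := Superforms {
  parA : bool -> pred A;
  fdeg : nat -> pred Om;
  par : bool -> pred Om;
  emb : A -> Om;
  of0 : Om -> A;
  dd : Om -> Om;
  ip : (A -> A) -> Om -> Om;
  parA0 : forall p, parA p 0;
  parAD : forall p a b, parA p a -> parA p b -> parA p (a + b);
  parAZ : forall p (c : K) a, parA p a -> parA p (c *: a);
  parA1 : parA false 1;
  parAM : forall p q a b, parA p a -> parA q b -> parA (p (+) q) (a * b);
  parA_indep : forall a, parA false a -> parA true a -> a = 0;
  parA_decomp : forall a, exists a0 a1, [/\ parA false a0, parA true a1 & a = a0 + a1];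
  parA_comm : forall p q a b, parA p a -> parA q b -> a * b = sgn (p && q) * (b * a);
  fdeg0 : forall k, fdeg k 0;
  fdegD : forall k x y, fdeg k x -> fdeg k y -> fdeg k (x + y);
  fdegZ : forall k (c : K) x, fdeg k x -> fdeg k (c *: x);
  fdeg1 : fdeg 0 1;
  fdegM : forall k l x y, fdeg k x -> fdeg l y -> fdeg (k + l) (x * y);
  fdeg_indep : forall k l x, k <> l -> fdeg k x -> fdeg l x -> x = 0;
  par0 : forall p, par p 0;
  parD : forall p x y, par p x -> par p y -> par p (x + y);
  parZ : forall p (c : K) x, par p x -> par p (c *: x);
  par1 : par false 1;
  parM : forall p q x y, par p x -> par q y -> par (p (+) q) (x * y);
  par_indep : forall x, par false x -> par true x -> x = 0;
  bigraded_decomp : forall x, exists s : seq (nat * bool * Om),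
      (forall t, t \in s -> fdeg t.1.1 t.2 /\ par t.1.2 t.2)
      /\ x = \sum_(t <- s) t.2;
  wedge_comm : forall k l p q x y, fdeg k x -> par p x -> fdeg l y -> par q y ->
      x * y = sgn (k * l + (p && q)) * (y * x);
  embD : forall a b, emb (a + b) = emb a + emb b;
  embZ : forall (c : K) a, emb (c *: a) = c *: emb a;
  embM : forall a b, emb (a * b) = emb a * emb b;
  emb1 : emb 1 = 1;
  emb_fdeg : forall a, fdeg 0 (emb a);
  emb_par : forall p a, parA p a -> par p (emb a);
  embK : forall a, of0 (emb a) = a;
  of0K : forall x, fdeg 0 x -> emb (of0 x) = x;
  omega1_gen : forall p x, fdeg 1 x -> par p x ->
      exists s : seq (A * A),
        (forall t, t \in s -> exists pf pg,
             [/\ parA pf t.1, parA pg t.2 & pf (+) pg = p])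
        /\ x = \sum_(t <- s) emb t.1 * dd (emb t.2);
  omega_gen : forall k x, fdeg k.+1 x ->
      exists s : seq (Om * Om),
        (forall t, t \in s -> fdeg 1 t.1 /\ fdeg k t.2)
        /\ x = \sum_(t <- s) t.1 * t.2;
  ddD : forall x y, dd (x + y) = dd x + dd y;
  ddZ : forall (c : K) x, dd (c *: x) = c *: dd x;
  dd_fdeg : forall k x, fdeg k x -> fdeg k.+1 (dd x);
  dd_par : forall p x, par p x -> par p (dd x);
  ddK : forall x, dd (dd x) = 0;
  ddM : forall k x y, fdeg k x -> dd (x * y) = dd x * y + sgn k * (x * dd y);
  ipD : forall q D x y, superder parA q D -> ip D (x + y) = ip D x + ip D y;
  ipZ : forall q D (c : K) x, superder parA q D -> ip D (c *: x) = c *: ip D x;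
  ip_emb : forall q D a, superder parA q D -> ip D (emb a) = 0;
  ip_d : forall q D a, superder parA q D -> ip D (dd (emb a)) = emb (D a);
  ip_fdeg : forall q D k x, superder parA q D -> fdeg k.+1 x -> fdeg k (ip D x);
  ip_par : forall q D p x, superder parA q D -> par p x -> par (p (+) q) (ip D x);
  ipM : forall q D k p x y, superder parA q D -> fdeg k x -> par p x ->
      ip D (x * y) = ip D x * y + sgn (k + (q && p)) * (x * ip D y)
}.

Section Defs.
Variables (K : realFieldType) (A Om : lalgType K) (S : superforms A Om).

Definition bihom (k : nat) (p : bool) (x : Om) : Prop := fdeg S k x /\ par S p x.

Record diff_gerstenhaber (br : Om -> Om -> Om) : Prop := DiffGerstenhaber {
  brDl : forall x y z, br (x + y) z = br x z + br y z;
  brDr : forall x y z, br x (y + z) = br x y + br x z;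
  brZl : forall (c : K) x y, br (c *: x) y = c *: br x y;
  brZr : forall (c : K) x y, br x (c *: y) = c *: br x y;
  (* form degree -1 (Omega^{-1} = 0) *)
  br_fdeg : forall k l x y, fdeg S k x -> fdeg S l y -> fdeg S (k + l).-1 (br x y);
  br_fdeg0 : forall x y, fdeg S 0 x -> fdeg S 0 y -> br x y = 0;
  br_par : forall p q x y, par S p x -> par S q y -> par S (p (+) q) (br x y);
  (* (-1)^{(k-1)(l-1)} = (-1)^{(k+1)(l+1)} etc. *)
  br_skew : forall k l p q x y, bihom k p x -> bihom l q y ->
      br x y = - (sgn (k.+1 * l.+1 + (p && q)) * br y x);
  br_jacobi : forall k l p q x y z, bihom k p x -> bihom l q y ->
      br x (br y z) = br (br x y) z + sgn (k.+1 * l.+1 + (p && q)) * br y (br x z);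
  br_leibniz : forall k l p q x y z, bihom k p x -> bihom l q y ->
      br x (y * z) = br x y * z + sgn (k.+1 * l + (p && q)) * (y * br x z);
  br_diff : forall k x y, fdeg S k x ->
      dd S (br x y) = br (dd S x) y + sgn k.+1 * br x (dd S y)
}.

Definition anchor (br : Om -> Om -> Om) (alpha : Om) : A -> A :=
  fun f => of0 S (br alpha (emb S f)).

Definition pairing (alpha : Om) (D : A -> A) : A := of0 S (ip S D alpha).

Definition skew_anchor (rho : Om -> A -> A) : Prop :=
  forall pa pb a b, bihom 1 pa a -> bihom 1 pb b ->
    pairing a (rho b) = - (sgn (pa && pb) * pairing b (rho a)).

Definition poisson_type (rho : Om -> A -> A) : Prop :=
  skew_anchor rho /\
  let pb := fun f g => rho (dd S (emb S f)) g in
  forall pf pg ph f g h, parA S pf f -> parA S pg g -> parA S ph h ->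
    pb f (pb g h) = pb (pb f g) h + sgn (pf && pg) * pb g (pb f h).

End Defs.

From HB Require Import structures.
From mathcomp Require Import all_boot all_order all_algebra.
Set Implicit Arguments. Unset Strict Implicit. Unset Printing Implicit Defensive.
Import Order.TTheory GRing.Theory Num.Theory.
Local Open Scope ring_scope.

(* Every homogeneous 1-form is a finite sum of generators f dg with homogeneous
   f, g (axiom omega1_gen).  Hence two expressions that are additive in each of
   their 1-form arguments agree as soon as they agree on generators
   (gen1_ext, gen1_ext2); this "generator principle" drives the whole proof.

   The anchor rho(a) = [a, .]|_A of a homogeneous 1-form a is a superderivation
   of parity p(a) (rho_der).  On generators the bracket is governed by a few
   rules: rho(h dg) = h rho(dg), [dg, f] = [g, df], skew-symmetry
   rho(dg)(f) = -(-1)^{p(f)p(g)} rho(df)(g), and [df, dg] = d[df, g]; the last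
   one is the second claim of the theorem.  Skew-supersymmetry of the anchor
   and the bracket formula are then explicit sign computations on generators,
   extended to all 1-forms by the generator principle; interior products
   i_{rho(a)} are additive in a on 1-forms and exact 2-forms since they are on
   generators.  The Poisson property is the Jacobi identity of the bracket
   applied to df, dg, h together with [df, dg] = d rho(df)(g). *)

Lemma sgnE (R : pzRingType) n : sgn n = (if odd n then -1 else 1 : R).
Proof. by rewrite /sgn -signr_odd; case: odd; rewrite ?expr0 ?expr1. Qed.

Ltac sign_simpl := rewrite ?sgnE ?(oddD, oddM, oddb) /=.
Ltac ring_simpl := rewrite ?(mulN1r, mulrN1, mul1r, mulr1, mulrN, mulNr, opprK,
  mulrA, mul0r, mulr0, addr0, add0r, oppr0).

Lemma self_add_eq0 (V : zmodType) (v : V) : v = v + v -> v = 0.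
Proof. by move=> h; apply: (addrI v); rewrite addr0 -h. Qed.

Lemma addrACA3 (V : zmodType) (x1 x2 y1 y2 z1 z2 : V) :
  (x1 + x2) - (y1 + y2) + (z1 + z2) = (x1 - y1 + z1) + (x2 - y2 + z2).
Proof. by rewrite [RHS]addrACA (addrACA x1) opprD. Qed.

(* The maps emb, dd, ip D and the bracket are only postulated to be additive;
   additivity already gives compatibility with 0, opposites and signs. *)
Section AdditiveMaps.
Variables (U V : zmodType) (f : U -> V).
Hypothesis fD : forall x y, f (x + y) = f x + f y.

Lemma additive0 : f 0 = 0.
Proof. by apply: self_add_eq0; rewrite -fD addr0. Qed.

Lemma additiveN x : f (- x) = - f x.
Proof. by apply/eqP; rewrite -addr_eq0 -fD addNr additive0. Qed.

End AdditiveMaps.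

Lemma additive_sgnM (U V : pzRingType) (f : U -> V) :
  (forall x y, f (x + y) = f x + f y) -> forall n x, f (sgn n * x) = sgn n * f x.
Proof.
by move=> fD n x; rewrite !sgnE; case: odd; rewrite ?mulN1r ?mul1r ?(additiveN fD).
Qed.

Section Superforms.
Variables (K : realFieldType) (A Om : lalgType K) (S : superforms A Om).
Local Notation e := (emb S).
Local Notation d := (dd S).

Lemma embN a : e (- a) = - e a.
Proof. exact: (@additiveN _ _ e (embD S)). Qed.

Lemma emb_sgn n : e (sgn n) = sgn n.
Proof. by rewrite !sgnE; case: odd; rewrite ?embN emb1. Qed.

Lemma emb_inj : injective e.
Proof. exact: can_inj (embK S). Qed.

Lemma dd_sgn n x : d (sgn n * x) = sgn n * d x.
Proof. exact: (@additive_sgnM _ _ d (ddD S)). Qed.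

Lemma par_of0 r x : fdeg S 0 x -> par S r x -> parA S r (of0 S x).
Proof.
move=> x0 xr; have [a0 [a1 [h0 h1 xE]]] := parA_decomp S (of0 S x).
have ex : x = e a0 + e a1 by rewrite -embD -xE of0K.
have parN p y : par S p y -> par S p (- y) by rewrite -scaleN1r; apply: parZ.
have e0 : e 0 = 0 := @additive0 _ _ e (embD S).
case: r xr => xr; rewrite xE.
- suff -> : a0 = 0 by rewrite add0r.
  have ea0 : e a0 = x - e a1 by rewrite ex addrK.
  apply: emb_inj; rewrite e0; apply: par_indep; first exact: emb_par.
  by rewrite ea0; apply: parD => //; apply: parN; apply: emb_par.
- suff -> : a1 = 0 by rewrite addr0.
  have ea1 : e a1 = x - e a0 by rewrite ex addrC addKr.
  apply: emb_inj; rewrite e0; apply: par_indep; last exact: emb_par.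
  by rewrite ea1; apply: parD => //; apply: parN; apply: emb_par.
Qed.

Lemma bihom0 k p : bihom S k p 0.
Proof. by split; [apply: fdeg0 | apply: par0]. Qed.

Lemma bihomD k p x y : bihom S k p x -> bihom S k p y -> bihom S k p (x + y).
Proof. by move=> [? ?] [? ?]; split; [apply: fdegD | apply: parD]. Qed.

Lemma emb_bihom p f : parA S p f -> bihom S 0 p (e f).
Proof. by move=> hf; split; [apply: emb_fdeg | apply: emb_par]. Qed.

Lemma demb_bihom p f : parA S p f -> bihom S 1 p (d (e f)).
Proof. by move=> /emb_bihom[h0 hp]; split; [apply: dd_fdeg | apply: dd_par]. Qed.

Lemma gen_bihom pf pg f g : parA S pf f -> parA S pg g ->
  bihom S 1 (pf (+) pg) (e f * d (e g)).
Proof.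
move=> /emb_bihom[h1 h2] /demb_bihom[h3 h4].
by split; [apply: (fdegM h1 h3) | apply: parM].
Qed.

Definition additive_on (V : zmodType) (P : Om -> Prop) (F : Om -> V) : Prop :=
  forall x y, P x -> P y -> F (x + y) = F x + F y.

Lemma gen1_ext (V : zmodType) p (F G : Om -> V) :
  additive_on (bihom S 1 p) F -> additive_on (bihom S 1 p) G ->
  (forall pf pg f g, parA S pf f -> parA S pg g -> pf (+) pg = p ->
     F (e f * d (e g)) = G (e f * d (e g))) ->
  forall x, bihom S 1 p x -> F x = G x.
Proof.
move=> FD GD Fgen x [x1 xp]; have [s [hs ->]] := omega1_gen x1 xp.
have eq0 (H : Om -> V) : additive_on (bihom S 1 p) H -> H 0 = 0.
  by move=> HD; apply: self_add_eq0; rewrite -HD ?addr0 //; apply: bihom0.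
suff [] : bihom S 1 p (\sum_(t <- s) e t.1 * d (e t.2)) /\
          F (\sum_(t <- s) e t.1 * d (e t.2)) = G (\sum_(t <- s) e t.1 * d (e t.2))
  by [].
elim: s hs => [|t s IH] hs.
  by rewrite big_nil (eq0 F) // (eq0 G) //; split => //; apply: bihom0.
have [pf [pg [hf hg hp]]] := hs t (mem_head _ _).
have [IHb IHe] := IH (fun u hu => hs u (mem_behead (s := t :: s) hu)).
have ht : bihom S 1 p (e t.1 * d (e t.2)) by rewrite -hp; apply: gen_bihom.
rewrite big_cons; split; first exact: bihomD.
by rewrite FD ?GD // IHe (Fgen pf pg _ _ hf hg hp).
Qed.

Lemma gen1_ext2 (V : zmodType) pa pb (F G : Om -> Om -> V) :
  (forall b, bihom S 1 pb b -> additive_on (bihom S 1 pa) (F^~ b)) ->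
  (forall b, bihom S 1 pb b -> additive_on (bihom S 1 pa) (G^~ b)) ->
  (forall a, bihom S 1 pa a -> additive_on (bihom S 1 pb) (F a)) ->
  (forall a, bihom S 1 pa a -> additive_on (bihom S 1 pb) (G a)) ->
  (forall p1 q1 p2 q2 f1 g1 f2 g2,
     parA S p1 f1 -> parA S q1 g1 -> parA S p2 f2 -> parA S q2 g2 ->
     p1 (+) q1 = pa -> p2 (+) q2 = pb ->
     F (e f1 * d (e g1)) (e f2 * d (e g2)) = G (e f1 * d (e g1)) (e f2 * d (e g2))) ->
  forall a b, bihom S 1 pa a -> bihom S 1 pb b -> F a b = G a b.
Proof.
move=> FDl GDl FDr GDr Fgen a b ha hb.
apply: (@gen1_ext _ pa (F^~ b) (G^~ b) (FDl b hb) (GDl b hb)) ha.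
move=> p1 q1 f1 g1 hf1 hg1 hpa.
have hA : bihom S 1 pa (e f1 * d (e g1)) by rewrite -hpa; apply: gen_bihom.
apply: (gen1_ext (FDr _ hA) (GDr _ hA)) hb => p2 q2 f2 g2 hf2 hg2 hpb.
exact: Fgen hpa hpb.
Qed.

Lemma d_gen f g : d (e f * d (e g)) = d (e f) * d (e g).
Proof. by rewrite (ddM _ (emb_fdeg S f)) ddK !mulr0 addr0. Qed.

Section InteriorProduct.
Variables (q : bool) (D : A -> A).
Hypothesis hD : superder (parA S) q D.

Lemma ip_gen pf f g : parA S pf f ->
  ip S D (e f * d (e g)) = sgn (q && pf) * (e f * e (D g)).
Proof.
move=> hf; rewrite (ipM _ hD (emb_fdeg S f) (emb_par hf)) (ip_emb _ hD).
by rewrite (ip_d _ hD) mul0r add0r add0n.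
Qed.

Lemma ip_dgen pf f g : parA S pf f ->
  ip S D (d (e f) * d (e g))
  = e (D f) * d (e g) + sgn (1 + (q && pf)) * (d (e f) * e (D g)).
Proof. by move=> /demb_bihom[h1 h2]; rewrite (ipM _ hD h1 h2) !(ip_d _ hD). Qed.

Lemma emb_pairing b : fdeg S 1 b -> e (pairing S b D) = ip S D b.
Proof. by move=> b1; rewrite /pairing of0K //; apply: (ip_fdeg hD). Qed.

End InteriorProduct.

Section InteriorProductSum.
Variables (q : bool) (D1 D2 D3 : A -> A).
Hypotheses (hD1 : superder (parA S) q D1) (hD2 : superder (parA S) q D2)
  (hD3 : superder (parA S) q D3).
Hypothesis D3E : forall g, D3 g = D1 g + D2 g.

Lemma ip_derD p x : bihom S 1 p x -> ip S D3 x = ip S D1 x + ip S D2 x.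
Proof.
apply: (@gen1_ext _ p (ip S D3) (fun x => ip S D1 x + ip S D2 x)).
- by move=> x1 y1 _ _; apply: (ipD _ _ hD3).
- by move=> x1 y1 _ _; rewrite (ipD _ _ hD1) (ipD _ _ hD2) addrACA.
- move=> pf pg f g hf _ _.
  rewrite (ip_gen hD1 _ hf) (ip_gen hD2 _ hf) (ip_gen hD3 _ hf).
  by rewrite D3E embD !mulrDr.
Qed.

Lemma ip_derD_d p x : bihom S 1 p x ->
  ip S D3 (d x) = ip S D1 (d x) + ip S D2 (d x).
Proof.
apply: (@gen1_ext _ p (fun x => ip S D3 (d x))
                      (fun x => ip S D1 (d x) + ip S D2 (d x))).
- by move=> x1 y1 _ _; rewrite ddD (ipD _ _ hD3).
- by move=> x1 y1 _ _; rewrite ddD (ipD _ _ hD1) (ipD _ _ hD2) addrACA.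
- move=> pf pg f g hf _ _.
  rewrite d_gen (ip_dgen hD1 _ hf) (ip_dgen hD2 _ hf) (ip_dgen hD3 _ hf).
  by rewrite !D3E !embD mulrDl !mulrDr addrACA.
Qed.

End InteriorProductSum.

Section Bracket.
Variable br : Om -> Om -> Om.
Hypothesis hG : diff_gerstenhaber S br.
Local Notation rho := (anchor S br).

Lemma rhoE b g : fdeg S 1 b -> e (rho b g) = br b (e g).
Proof.
by move=> b1; rewrite /anchor of0K //; apply: (br_fdeg hG b1 (emb_fdeg S g)).
Qed.

(* The anchor of a homogeneous 1-form of parity q is a superderivation of
   parity q: this is the Leibniz rule of the bracket restricted to A. *)
Lemma rho_der q b : bihom S 1 q b -> superder (parA S) q (rho b).
Proof.
move=> [b1 bq]; split.
- by move=> a c; apply: emb_inj; rewrite embD !rhoE // embD (brDr hG).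
- by move=> c a; apply: emb_inj; rewrite embZ !rhoE // embZ (brZr hG).
- move=> p a ha; rewrite addbC; apply: par_of0.
    exact: (br_fdeg hG b1 (emb_fdeg S a)).
  exact: (br_par hG bq (emb_par ha)).
- move=> p a c ha; apply: emb_inj; rewrite embD !embM !rhoE // embM emb_sgn.
  by rewrite (br_leibniz hG _ (conj b1 bq) (emb_bihom ha)) muln0.
Qed.

Lemma rhoD x y g : fdeg S 1 x -> fdeg S 1 y -> rho (x + y) g = rho x g + rho y g.
Proof.
by move=> x1 y1; apply: emb_inj; rewrite embD !rhoE ?(brDl hG) //; apply: fdegD.
Qed.

Lemma ip_rhoD q p x y b : bihom S 1 q x -> bihom S 1 q y -> bihom S 1 p b ->
  ip S (rho (x + y)) b = ip S (rho x) b + ip S (rho y) b.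
Proof.
move=> hx hy hb; have sumE g := rhoD g (proj1 hx) (proj1 hy).
exact: (ip_derD (rho_der hx) (rho_der hy) (rho_der (bihomD hx hy)) sumE hb).
Qed.

Lemma ip_rhoD_d q p x y b : bihom S 1 q x -> bihom S 1 q y -> bihom S 1 p b ->
  ip S (rho (x + y)) (d b) = ip S (rho x) (d b) + ip S (rho y) (d b).
Proof.
move=> hx hy hb; have sumE g := rhoD g (proj1 hx) (proj1 hy).
exact: (ip_derD_d (rho_der hx) (rho_der hy) (rho_der (bihomD hx hy)) sumE hb).
Qed.

Lemma br_gen_fun ph pg' pg h g' g : parA S ph h -> parA S pg' g' -> parA S pg g ->
  br (e h * d (e g')) (e g) = e h * br (d (e g')) (e g).
Proof.
move=> hh hg' hg.
rewrite (br_skew hG (gen_bihom hh hg') (emb_bihom hg)).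
rewrite (br_leibniz hG _ (emb_bihom hg) (emb_bihom hh)).
rewrite (br_fdeg0 hG) ?emb_fdeg // mul0r add0r.
rewrite (br_skew hG (emb_bihom hg) (demb_bihom hg')).
by clear hh hg' hg; sign_simpl; case: ph; case: pg'; case: pg; ring_simpl.
Qed.

(* [dg, f] = [g, df], from the compatibility of d with the bracket. *)
Lemma br_dfun_swap f g : br (d (e g)) (e f) = br (e g) (d (e f)).
Proof.
have := br_diff hG (e f) (emb_fdeg S g).
rewrite (br_fdeg0 hG) ?emb_fdeg // (@additive0 _ _ d (ddD S)) sgnE /= mulN1r => h.
by apply/eqP; rewrite -subr_eq0 -h.
Qed.

Lemma br_dfun_skew q1 q2 g1 g2 : parA S q1 g1 -> parA S q2 g2 ->
  br (d (e g2)) (e g1) = - (sgn (q2 && q1) * br (d (e g1)) (e g2)).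
Proof.
move=> h1 h2; rewrite br_dfun_swap (br_skew hG (emb_bihom h2) (demb_bihom h1)).
by sign_simpl.
Qed.

Lemma br_exact f g : br (d (e f)) (d (e g)) = d (br (d (e f)) (e g)).
Proof.
have df1 : fdeg S 1 (d (e f)) by apply/dd_fdeg/emb_fdeg.
have br0 : br 0 (e g) = 0 := @additive0 _ _ (br^~ _) (fun x y => brDl hG x y _).
by rewrite (br_diff hG _ df1) ddK br0 add0r sgnE /= mul1r.
Qed.

Lemma br_exact_anchor f g : br (d (e f)) (d (e g)) = d (e (rho (d (e f)) g)).
Proof. by rewrite rhoE ?br_exact //; apply/dd_fdeg/emb_fdeg. Qed.

Lemma emb_comm p1 p2 f1 f2 : parA S p1 f1 -> parA S p2 f2 ->
  e f2 * e f1 = sgn (p2 && p1) * (e f1 * e f2).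
Proof. by move=> h1 h2; rewrite -embM (parA_comm h2 h1) embM emb_sgn embM. Qed.

Lemma ip_anchor_skew pa pb a b : bihom S 1 pa a -> bihom S 1 pb b ->
  ip S (rho b) a = - (sgn (pa && pb) * ip S (rho a) b).
Proof.
apply: (@gen1_ext2 _ pa pb (fun a b => ip S (rho b) a)
          (fun a b => - (sgn (pa && pb) * ip S (rho a) b))) => /=.
- by move=> c hc x y _ _; apply: (ipD _ _ (rho_der hc)).
- by move=> c hc x y hx hy; rewrite (ip_rhoD hx hy hc) mulrDr opprD.
- by move=> c hc x y hx hy /=; apply: ip_rhoD hx hy hc.
- by move=> c hc x y _ _; rewrite (ipD _ _ (rho_der hc)) mulrDr opprD.
move=> p1 q1 p2 q2 f1 g1 f2 g2 hf1 hg1 hf2 hg2 hpa hpb.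
have [a1 _] := gen_bihom hf1 hg1; have [b1 _] := gen_bihom hf2 hg2.
rewrite (ip_gen (rho_der (gen_bihom hf2 hg2)) _ hf1).
rewrite (ip_gen (rho_der (gen_bihom hf1 hg1)) _ hf2) !rhoE //.
rewrite (br_gen_fun hf2 hg2 hg1) (br_gen_fun hf1 hg1 hg2) (br_dfun_skew hg1 hg2).
rewrite (mulrA (e f2) (e f1)) (emb_comm hf1 hf2) -hpa -hpb; clear.
by sign_simpl; case: p1; case: q1; case: p2; case: q2; ring_simpl.
Qed.

Lemma anchor_skew : skew_anchor S rho.
Proof.
move=> pa pb a b ha hb; apply: emb_inj.
rewrite embN embM emb_sgn (emb_pairing (rho_der hb) (proj1 ha)).
by rewrite (emb_pairing (rho_der ha) (proj1 hb)); apply: ip_anchor_skew.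
Qed.

(* Term-by-term matching of the two sides of the bracket formula on
   generators, in the order produced by the expansion below. *)
Lemma match_expansions (V : zmodType) (T1 L1 L2 X1 X2 Y1 Y2 Z1 Z2 : V) :
  L1 = Y1 -> - L2 = Z2 -> X1 + X2 = 0 -> Y2 = Z1 ->
  T1 + (L1 - L2) = T1 + X1 + (Y1 - Y2) + (X2 + (Z1 + Z2)).
Proof.
move=> -> <- h ->.
have -> : X2 = - X1 by apply/eqP; rewrite -addr_eq0 addrC h.
rewrite -!addrA; congr (T1 + _).
by rewrite addrCA; congr (Y1 + _); rewrite addrCA addNKr addKr.
Qed.

(* The bracket formula on a pair of generators a = f1 dg1, b = f2 dg2: both
   sides are expanded, via the Leibniz rules and the rules for brackets of
   exact forms with functions, into terms built from f1, f2, df1, df2, dg1, dg2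
   and the values of rho(dg1), rho(dg2); they agree up to signs and one
   supercommutation f2 df1 = (-1)^{p(f1)p(f2)} df1 f2. *)
Lemma bracket_formula_gen p1 q1 p2 q2 f1 g1 f2 g2 :
  parA S p1 f1 -> parA S q1 g1 -> parA S p2 f2 -> parA S q2 g2 ->
  let a := e f1 * d (e g1) in let b := e f2 * d (e g2) in
  br a b = ip S (rho a) (d b)
           - sgn ((p1 (+) q1) && (p2 (+) q2)) * ip S (rho b) (d a)
           + d (ip S (rho a) b).
Proof.
move=> hf1 hg1 hf2 hg2 a b.
have hA : bihom S 1 (p1 (+) q1) a := gen_bihom hf1 hg1.
have hB : bihom S 1 (p2 (+) q2) b := gen_bihom hf2 hg2.
rewrite {1}/b (br_leibniz hG _ hA (emb_bihom hf2)).
rewrite (br_skew hG hA (demb_bihom hg2)) {2}/a.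
rewrite (br_leibniz hG _ (demb_bihom hg2) (emb_bihom hf1)).
rewrite br_exact (br_dfun_skew hg1 hg2).
rewrite /b d_gen (ip_dgen (rho_der hA) _ hf2) /a d_gen (ip_dgen (rho_der hB) _ hf1).
rewrite (ip_gen (rho_der hA) _ hf2) dd_sgn !rhoE ?(proj1 hA) ?(proj1 hB) //.
rewrite (br_gen_fun hf2 hg2 hf1) (br_gen_fun hf2 hg2 hg1) (br_gen_fun hf1 hg1 hg2).
rewrite (br_dfun_skew hg1 hg2) (ddM _ (emb_fdeg S f2)) (ddM _ (emb_fdeg S f1)).
rewrite (@additiveN _ _ d (ddD S)) dd_sgn !(sgnE _ 0) /= !mul1r ?(mulrDr, opprD, mulrN).
have f2df1 : e f2 * d (e f1) = sgn (0 * 1 + (p2 && p1)) * (d (e f1) * e f2).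
  by apply: wedge_comm; [apply: emb_fdeg | apply: emb_par
                        | apply/dd_fdeg/emb_fdeg | apply/dd_par/emb_par].
apply: match_expansions; last rewrite (mulrA (e f2) (d (e f1))) f2df1;
  clear hA hB f2df1 hf1 hg1 hf2 hg2;
  sign_simpl; case: p1; case: q1; case: p2; case: q2; ring_simpl;
  by rewrite ?addNr ?subrr.
Qed.

Lemma bracket_formula_ip pa pb a b : bihom S 1 pa a -> bihom S 1 pb b ->
  br a b = ip S (rho a) (d b) - sgn (pa && pb) * ip S (rho b) (d a)
           + d (ip S (rho a) b).
Proof.
apply: (@gen1_ext2 _ pa pb br (fun a b => ip S (rho a) (d b)
          - sgn (pa && pb) * ip S (rho b) (d a) + d (ip S (rho a) b))) => /=.
- by move=> c hc x y _ _; apply: (brDl hG).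
- move=> c hc x y hx hy.
  rewrite (ip_rhoD_d hx hy hc) ddD (ipD _ _ (rho_der hc)) (ip_rhoD hx hy hc).
  by rewrite ddD mulrDr addrACA3.
- by move=> c hc x y _ _; apply: (brDr hG).
- move=> c hc x y hx hy.
  rewrite ddD (ipD _ _ (rho_der hc)) (ip_rhoD_d hx hy hc) (ipD _ _ (rho_der hc)).
  by rewrite ddD mulrDr addrACA3.
move=> p1 q1 p2 q2 f1 g1 f2 g2 hf1 hg1 hf2 hg2 <- <-.
exact: bracket_formula_gen.
Qed.

Lemma bracket_formula pa pb a b : bihom S 1 pa a -> bihom S 1 pb b ->
  br a b = ip S (rho a) (d b) - sgn (pa && pb) * ip S (rho b) (d a)
           + d (e (pairing S b (rho a))).
Proof.
move=> ha hb; rewrite (emb_pairing (rho_der ha) (proj1 hb)).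
exact: bracket_formula_ip.
Qed.

(* Super-Jacobi for {f, g} = rho(df)(g) is the Jacobi identity of the bracket
   on df, dg, h, rewritten with [df, dg] = d{f, g}. *)
Lemma anchor_poisson : poisson_type S rho.
Proof.
split; first exact: anchor_skew.
cbv zeta; move=> pf pg ph f g h hf hg _; apply: emb_inj.
have d1 u : fdeg S 1 (d (e u)) by apply/dd_fdeg/emb_fdeg.
rewrite embD embM emb_sgn -br_exact_anchor !rhoE ?d1 //;
  last exact: (br_fdeg hG (d1 f) (d1 g)).
rewrite (br_jacobi hG _ (demb_bihom hf) (demb_bihom hg)).
by rewrite !sgnE oddD oddM.
Qed.

End Bracket.
End Superforms.

Theorem mainTheorem7 (K : realFieldType) (A Om : lalgType K)
    (S : superforms A Om) (br : Om -> Om -> Om)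
    (hG : diff_gerstenhaber S br) :
  let rho := anchor S br in
  [/\ skew_anchor S rho,
      (forall f g : A, br (dd S (emb S f)) (dd S (emb S g))
                       = dd S (emb S (rho (dd S (emb S f)) g))),
      (forall pa pb a b, bihom S 1 pa a -> bihom S 1 pb b ->
         br a b = ip S (rho a) (dd S b)
                  - sgn (pa && pb) * ip S (rho b) (dd S a)
                  + dd S (emb S (pairing S b (rho a))))
    & poisson_type S rho].
Proof.
move=> rho; split.
- exact: anchor_skew hG.
- exact: br_exact_anchor hG.
- exact: bracket_formula hG.
- exact: anchor_poisson hG.
Qed.
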